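(* Let $X$ be an extensible marked Dynkin diagram with $d$ nodes, let $n\ge d$ with $\det(X_n)\ne0$, let $R=\mathbb Z/\det(X_n)\mathbb Z$, and let $b_1,\dots,b_n\in R$ be such that $(-\Delta)\,\omega_i^{(n)}\equiv b_i\,\overline{\omega}_1^{(n)}\pmod{Q(X_n)}$ for $i=1,\dots,n$. Put $b=(b_1,\dots,b_n)^T\in R^n$ and let $A=C(X_n)$, viewed as a matrix over $R$. Then: (i) $A^Tb=0$ in $R^n$; (ii) if $x\in R^n$ satisfies $A^Tx=0$, then $x$ is a multiple of $b$; (iii) $b$ is the unique element of $R^n$ such that $A^Tb=0$ and $b_n=-\Delta+\det(X_n)\mathbb Z$.
   Context: A marked Dynkin diagram $X$ has nodes $1,\dots,d$ with node $d$ distinguished and symmetrizable generalized Cartan matrix $C(X)$. For $n\ge d$, $X_n$ is obtained by attaching a simply-laced chain of new nodes $d+1,\dots,n$ to node $d$ (so $C(X_n)$ has $C(X)$ as upper-left block, $2$ on the remaining diagonal, $-1$ in positions $(i,i+1),(i+1,i)$ for $d\le i<n$, $0$ elsewhere). $\det(Y)$ is the determinant of the generalized Cartan matrix of $Y$. The sequence $\det(X_n)$, $n\ge d$, is arithmetic with common difference $\Delta$; $X$ is extensible if $\Delta\ne0$, $\det(X)\ne0$ and $\gcd(\Delta,\det X)=1$. For $\mathfrak g(X_n)$: simple roots $\alpha_i^{(n)}$, coroots $\check\alpha_i^{(n)}$ with $\alpha_j^{(n)}(\check\alpha_i^{(n)})=C(X_n)_{ij}$, root lattice $Q(X_n)$,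 weight lattice $P(X_n)$, fundamental weights $\omega_i^{(n)}$ with $\omega_i^{(n)}(\check\alpha_j^{(n)})=\delta_{ij}$, $\overline{\omega}_1^{(n)}=\omega_n^{(n)}$. When $\det(X_n)\ne0$, $P(X_n)/Q(X_n)$ is cyclic of order $|\det(X_n)|$ generated by $[\overline{\omega}_1^{(n)}]$, so multiplying $\overline{\omega}_1^{(n)}$ by an element of $R$ is well defined modulo $Q(X_n)$. *)

From HB Require Import structures.
From mathcomp Require Import all_boot all_order all_algebra.
Set Implicit Arguments. Unset Strict Implicit. Unset Printing Implicit Defensive.
Import Order.TTheory GRing.Theory Num.Theory.
Local Open Scope ring_scope.

(* Nodes are 0-indexed: paper node k is index k-1.  The distinguished
   node d of X is index d-1. *)

Definition is_GCM (k : nat) (A : 'M[int]_k) : Prop :=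
  [/\ (forall i, A i i = 2),
      (forall i j, i != j -> A i j <= 0) &
      (forall i j, A i j = 0 <-> A j i = 0)].

Definition symmetrizable (k : nat) (A : 'M[int]_k) : Prop :=
  exists e : 'rV[rat]_k, (forall i, 0 < e 0 i) /\
    diag_mx e *m map_mx (fun z : int => z%:~R) A
    = (diag_mx e *m map_mx (fun z : int => z%:~R) A)^T.

(* C(X_n): C(X) as upper-left block, a simply-laced chain d+1,...,n
   attached to node d. *)
Definition ext_mx (d : nat) (C : 'M[int]_d) (n : nat) : 'M[int]_n :=
  \matrix_(i < n, j < n)
    match (insub (val i) : option 'I_d), (insub (val j) : option 'I_d) with
    | Some i', Some j' => C i' j'
    | _, _ =>
      if val i == val j then 2
      else if ((val i).+1 == val j) && (d <= val j)%N
              || ((val j).+1 == val i) && (d <= val i)%N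
           then -1 else 0
    end.

Definition detX (d : nat) (C : 'M[int]_d) (n : nat) : int := \det (ext_mx C n).

(* common difference Delta of the arithmetic sequence det(X_n), n >= d *)
Definition Delta (d : nat) (C : 'M[int]_d) : int := detX C d.+1 - detX C d.

Definition extensible (d : nat) (C : 'M[int]_d) : Prop :=
  [/\ Delta C != 0, \det C != 0 & coprimez (Delta C) (\det C)].

(* Weight lattice P(X_n) realized as Z^n in the basis of fundamental weights
   omega_i (omega_i(coroot_j) = delta_ij); the simple root alpha_j then has
   coordinates alpha_j(coroot_i) = C_ij, i.e. column j of C(X_n). *)
Definition fund_weight (n : nat) (i : 'I_n) : 'cV[int]_n := delta_mx i 0.

Definition simple_root (n : nat) (A : 'M[int]_n) (j : 'I_n) : 'cV[int]_n :=
  col j A.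

Definition in_root_lattice (n : nat) (A : 'M[int]_n) (v : 'cV[int]_n) : Prop :=
  exists c : 'I_n -> int, v = \sum_j c j *: simple_root A j.

From HB Require Import structures.
From mathcomp Require Import all_boot all_order all_algebra.
From mathcomp Require Import ring zify.
Set Implicit Arguments. Unset Strict Implicit. Unset Printing Implicit Defensive.
Import Order.TTheory GRing.Theory Num.Theory.
Local Open Scope ring_scope.

(* Let A = C(X_n), D = det A and J = adj A, so that A J = J A = D.  A vector of
   the root lattice is A c, hence is killed by J modulo D; applied to the
   hypothesis on b this says that every row r of J satisfies
   Delta r_i = - b_i r_n (mod D).  Conversely D x = J^T (A^T x), so every
   solution of A^T x = 0 (mod D) is an integral combination of rows of J and
   satisfies the same relation.  Since det X_n = det X + (n - d) Delta, Delta
   is a unit modulo D, and so is the corner entry det X_{n-1} = D - Delta of J;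
   the last row of J thus determines b up to that unit, which yields A^T b = 0
   and b_n = - Delta, and the relation gives (ii) and the uniqueness in (iii). *)

Definition lead_submx (R : Type) k (M : 'M[R]_k.+1) : 'M[R]_k :=
  row' ord_max (col' ord_max M).

Section PendantNode.

Variables (R : comNzRingType) (k : nat) (M : 'M[R]_k.+2).
Let p : 'I_k.+2 := inord k.
Hypothesis last_row0 : forall j, j != ord_max -> j != p -> M ord_max j = 0.
Hypothesis last_col0 : forall i, i != ord_max -> i != p -> M i ord_max = 0.

Lemma det_pendant : \det M = M ord_max ord_max * \det (lead_submx M)
  - M ord_max p * M p ord_max * \det (lead_submx (lead_submx M)).
Proof.
have p_val : p = k :> nat by rewrite inordK.
have p_max : p != ord_max by apply/eqP => /(congr1 (@nat_of_ord _)); rewrite p_val => /n_Sn.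
rewrite (expand_det_row _ ord_max) (bigD1 ord_max) // (bigD1 p) //= big1 ?addr0; last first.
  by move=> j /andP[jn jp]; rewrite last_row0 ?mul0r.
rewrite /cofactor; set N := row' ord_max (col' p M).
have N_last i : N i ord_max = M (lift ord_max i) ord_max.
  by rewrite !mxE; congr (M _ _); apply: val_inj; rewrite /= /bump p_val leqnn.
rewrite [\det N](expand_det_col _ ord_max) (bigD1 ord_max) //= big1 ?addr0; last first.
  move=> i ni; rewrite N_last last_col0 ?mul0r // 1?eq_sym ?neq_lift //.
  apply: contra ni => /eqP/(congr1 (@nat_of_ord _)); rewrite lift_max p_val => ik.
  exact/eqP/ord_inj.
rewrite /cofactor N_last !addnn p_val addSn addnn exprS -!mul2n !exprM sqrrN !expr1n.
have -> : lift ord_max (ord_max : 'I_k.+1) = p by apply: ord_inj; rewrite lift_max p_val.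
have -> : row' ord_max (col' ord_max N) = lead_submx (lead_submx M).
  apply/matrixP => i j; rewrite !mxE; congr (M _ _); apply: val_inj.
  have jk : (k <= j)%N = false by rewrite leqNgt ltn_ord.
  by rewrite /= /bump p_val jk add0n jk ltnNge leq_eqVlt ltn_ord orbT.
ring.
Qed.

End PendantNode.

Section ExtendedCartanMatrix.

Variables (d : nat) (C : 'M[int]_d).

Lemma ext_mx_chainE n (i j : 'I_n) : (d <= i)%N || (d <= j)%N ->
  ext_mx C n i j =
    if i == j :> nat then 2 else if (i.+1 == j) || (j.+1 == i) then -1 else 0.
Proof.
move=> dij; rewrite mxE.
have -> : ((i.+1 == j) && (d <= j)%N || (j.+1 == i) && (d <= i)%N)
          = (i.+1 == j) || (j.+1 == i).
  by apply/idP/idP; lia.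
case/orP: dij => [di|dj]; first by rewrite insubF // ltnNge di.
by rewrite [insub (val j)]insubF ?ltnNge ?dj //; case: insub.
Qed.

Lemma ext_mx_self : ext_mx C d = C.
Proof. by apply/matrixP => i j; rewrite mxE !valK. Qed.

Lemma lead_submx_ext_mx k : lead_submx (ext_mx C k.+1) = ext_mx C k.
Proof.
have val_lift_max (i : 'I_k) : \val (lift ord_max i) = \val i by apply: lift_max.
by apply/matrixP => i j; rewrite !mxE !val_lift_max.
Qed.

Lemma adj_ext_mx_corner n : \adj (ext_mx C n.+1) ord_max ord_max = detX C n.
Proof.
rewrite mxE /cofactor addnn -mul2n exprM sqrrN !expr1n mul1r.
by rewrite -[row' _ _]/(lead_submx _) lead_submx_ext_mx.
Qed.

Lemma detX_rec k : (d <= k.+1)%N -> detX C k.+2 = 2 * detX C k.+1 - detX C k.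
Proof.
move=> dk; have p_val : (inord k : 'I_k.+2) = k :> nat by rewrite inordK.
have chainE (i j : 'I_k.+2) : i = ord_max \/ j = ord_max -> ext_mx C k.+2 i j =
    if i == j :> nat then 2 else if (i.+1 == j) || (j.+1 == i) then -1 else 0.
  by move=> ij; rewrite ext_mx_chainE //; case: ij => ->; rewrite /= dk ?orbT.
rewrite /detX det_pendant ?lead_submx_ext_mx.
- rewrite !chainE ?p_val; try tauto.
  by rewrite /= !eqxx /= (gtn_eqF (ltnSn k)) (ltn_eqF (ltnSn k)) orbT mulrNN mul1r.
- move=> j; rewrite -!val_eqE /= p_val => jn jp; have jk := ltn_ord j.
  by rewrite chainE ?ifF //=; [lia | lia | left].
- move=> i; rewrite -!val_eqE /= p_val => i_n ip; have ik := ltn_ord i.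
  by rewrite chainE ?ifF //=; [lia | lia | right].
Qed.

Lemma detX_succ n : (d <= n.+1)%N -> detX C n.+1 = detX C n + Delta C.
Proof.
have step t : detX C (d + t).+1 - detX C (d + t) = Delta C.
  elim: t => [|t IH]; first by rewrite addn0.
  by rewrite addnS detX_rec ?leqW ?leq_addr // -IH; ring.
move=> dn; case: (leqP d n) => [dn' | nd].
  by have := step (n - d)%N; rewrite subnKC // => <-; ring.
have dn1 : n.+1 = d by apply/eqP; rewrite eqn_leq dn nd.
by move: (detX_rec dn) (step 0); rewrite addn0 dn1 => rec <-; rewrite rec; ring.
Qed.

Lemma detX_arith t : detX C (d + t) = \det C + t%:Z * Delta C.
Proof.
elim: t => [|t IH]; first by rewrite addn0 mul0r addr0 /detX ext_mx_self.
by rewrite addnS detX_succ ?leqW ?leq_addr // IH -addn1 PoszD; ring.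
Qed.

Hypothesis coprime_Delta_det : coprimez (Delta C) (\det C).

Lemma coprime_Delta_detX n : (d <= n)%N -> coprimez (Delta C) (detX C n).
Proof. by move=> dn; rewrite -(subnKC dn) detX_arith /coprimez addrC gcdzMDl. Qed.

Lemma coprime_detX_succ n : (d <= n.+1)%N -> coprimez (detX C n) (detX C n.+1).
Proof.
move=> dn; have := coprime_Delta_detX dn.
by rewrite detX_succ // /coprimez gcdzDr gcdzDl gcdzC.
Qed.

End ExtendedCartanMatrix.
Lemma adj_mul_root_lattice n (A : 'M[int]_n) v :
  in_root_lattice A v -> forall k, (\det A %| (\adj A *m v) k ord0)%Z.
Proof.
case=> c -> k; have -> : \sum_j c j *: simple_root A j = A *m \col_j c j.
  by apply/matrixP => i q; rewrite summxE mxE; apply: eq_bigr => j _; rewrite !mxE mulrC.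
by rewrite mulmxA mul_adj_mx mul_scalar_mx mxE dvdz_mulr.
Qed.

Lemma kernel_trmx_mod_det n (A : 'M[int]_n) (x : 'cV[int]_n) : \det A != 0 ->
  (forall j, (\det A %| (A^T *m x) j ord0)%Z) -> exists w : 'cV_n, x = (\adj A)^T *m w.
Proof.
move=> detA_neq0 dvd_x; exists (\col_j ((A^T *m x) j ord0 %/ \det A)%Z).
have col_divzK (y : 'cV_n) : (forall j, \det A %| y j ord0)%Z ->
    \det A *: \col_j (y j ord0 %/ \det A)%Z = y.
  by move=> dvd_y; apply/matrixP => j q; rewrite (ord1 q) !mxE mulrC divzK.
apply: (scalemx_inj detA_neq0); rewrite scalemxAr col_divzK //.
by rewrite mulmxA -trmx_mul mul_mx_adj tr_scalar_mx mul_scalar_mx.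
Qed.

Section KernelTrmxModDet.

Variables (n : nat) (A : 'M[int]_n.+1) (delta : int) (b : 'cV[int]_n.+1).
Let D := \det A.
Let u := \adj A ord_max ord_max.
Hypothesis D_neq0 : D != 0.
Hypothesis coprime_delta : coprimez delta D.
Hypothesis coprime_u : coprimez u D.
Hypothesis b_root : forall i, in_root_lattice A
  (- delta *: fund_weight i - b i ord0 *: fund_weight ord_max).

Lemma adj_row_relation k i :
  (D %| - delta * \adj A k i - b i ord0 * \adj A k ord_max)%Z.
Proof.
have := adj_mul_root_lattice (b_root i) k.
by rewrite mulmxBr -!scalemxAr /fund_weight -!colE !mxE.
Qed.

Lemma kernel_trmx_relation (x : 'cV_n.+1) : (forall j, (D %| (A^T *m x) j ord0)%Z) ->
  forall i, (D %| - delta * x i ord0 - b i ord0 * x ord_max ord0)%Z.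
Proof.
case/kernel_trmx_mod_det => // w -> i.
rewrite ![(_ *m w) _ _]mxE !mulr_sumr -sumrB; apply: rpred_sum => k _.
rewrite ![(\adj A)^T _ _]mxE.
suff -> : - delta * (\adj A k i * w k ord0) - b i ord0 * (\adj A k ord_max * w k ord0)
    = w k ord0 * (- delta * \adj A k i - b i ord0 * \adj A k ord_max).
  exact/dvdz_mull/adj_row_relation.
ring.
Qed.

Let coprime_D_u : coprimez D u. Proof. by rewrite coprimez_sym. Qed.
Let coprime_D_delta : coprimez D delta. Proof. by rewrite coprimez_sym. Qed.

Lemma trmx_mul_b_dvd j : (D %| (A^T *m b) j ord0)%Z.
Proof.
rewrite -(Gauss_dvdzr _ coprime_D_u).
have -> : u * (A^T *m b) j ord0 =
    \sum_i A i j * - (- delta * \adj A ord_max i - b i ord0 * u)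
    - delta * (\adj A *m A) ord_max j.
  rewrite [(A^T *m b) _ _]mxE [(\adj A *m A) _ _]mxE !mulr_sumr -sumrB.
  by apply: eq_bigr => i _; rewrite !mxE; ring.
rewrite mul_adj_mx mxE rpredB ?dvdz_mull ?rpredMn ?dvdzz //.
by apply: rpred_sum => i _; rewrite dvdz_mull ?rpredN ?adj_row_relation.
Qed.

Lemma b_last_dvd : (D %| b ord_max ord0 + delta)%Z.
Proof.
rewrite -(Gauss_dvdzr _ coprime_D_u).
suff -> : u * (b ord_max ord0 + delta) = - (- delta * u - b ord_max ord0 * u).
  by rewrite rpredN adj_row_relation.
ring.
Qed.

Lemma kernel_trmx_multiple (x : 'cV_n.+1) : (forall j, (D %| (A^T *m x) j ord0)%Z) ->
  exists c, forall i, (D %| x i ord0 - c * b i ord0)%Z.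
Proof.
move=> ker_x; have [[s t] /= st] := coprimezP _ _ coprime_delta.
exists (- s * x ord_max ord0) => i.
suff -> : x i ord0 - - s * x ord_max ord0 * b i ord0 =
    - s * (- delta * x i ord0 - b i ord0 * x ord_max ord0) + t * x i ord0 * D.
  by rewrite rpredD ?dvdz_mull ?dvdzz ?kernel_trmx_relation.
by rewrite -[x i ord0 in LHS]mulr1 -st; ring.
Qed.

Lemma kernel_trmx_unique (y : 'cV_n.+1) : (forall j, (D %| (A^T *m y) j ord0)%Z) ->
  (D %| y ord_max ord0 + delta)%Z -> forall i, (D %| y i ord0 - b i ord0)%Z.
Proof.
move=> ker_y y_last i; rewrite -(Gauss_dvdzr _ coprime_D_delta).
suff -> : delta * (y i ord0 - b i ord0) =
    - (- delta * y i ord0 - b i ord0 * y ord_max ord0) - b i ord0 * (y ord_max ord0 + delta).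
  by rewrite rpredB ?rpredN ?dvdz_mull ?kernel_trmx_relation.
ring.
Qed.

End KernelTrmxModDet.

Lemma eqz_modP (d m n : int) : (m = n %[mod d])%Z <-> (d %| m - n)%Z.
Proof. by rewrite -eqz_mod_dvd; split => /eqP. Qed.

Theorem lemma3p5 (d : nat) (C : 'M[int]_d) (m : nat) (b : 'cV[int]_m.+1) :
  (0 < d)%N -> is_GCM C -> symmetrizable C -> extensible C ->
  (d <= m.+1)%N ->
  detX C m.+1 != 0 ->
  (forall i : 'I_m.+1, in_root_lattice (ext_mx C m.+1)
      ((- Delta C) *: fund_weight i - b i ord0 *: fund_weight ord_max)) ->
  let A := ext_mx C m.+1 in
  let D := detX C m.+1 in
  [/\ (forall i, ((A^T *m b) i ord0 = 0 %[mod D])%Z),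
      (forall x : 'cV[int]_m.+1,
         (forall i, ((A^T *m x) i ord0 = 0 %[mod D])%Z) ->
         exists c : int, forall i, (x i ord0 = c * b i ord0 %[mod D])%Z) &
      ((b ord_max ord0 = - Delta C %[mod D])%Z /\
       forall y : 'cV[int]_m.+1,
         (forall i, ((A^T *m y) i ord0 = 0 %[mod D])%Z) ->
         (y ord_max ord0 = - Delta C %[mod D])%Z ->
         forall i, (y i ord0 = b i ord0 %[mod D])%Z)].
Proof.
move=> _ _ _ [_ _ coprime_C] dm D_neq0 b_root A D.
have coprime_delta : coprimez (Delta C) D by apply: coprime_Delta_detX.
have coprime_u : coprimez (\adj A ord_max ord_max) D.
  by rewrite adj_ext_mx_corner; apply: coprime_detX_succ.
have ker_dvd x : (forall i, ((A^T *m x) i ord0 = 0 %[mod D])%Z) ->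
    forall j, (D %| (A^T *m x) j ord0)%Z.
  by move=> ker_x j; rewrite -[(A^T *m x) j ord0]subr0; apply/eqz_modP.
split.
- by move=> j; apply/eqz_modP; rewrite subr0; apply: (trmx_mul_b_dvd coprime_u b_root).
- move=> x /ker_dvd /(kernel_trmx_multiple D_neq0 coprime_delta b_root) [c dvd_c].
  by exists c => i; apply/eqz_modP.
split; first by apply/eqz_modP; rewrite opprK; apply: b_last_dvd coprime_u b_root.
move=> y /ker_dvd ker_y /eqz_modP; rewrite opprK => y_last i.
exact/eqz_modP/(kernel_trmx_unique D_neq0 coprime_delta b_root).
Qed.
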